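(* Let $f:\mathbb{R}^n\to\mathbb{R}$ be continuously differentiable with $L_f$-Lipschitz gradient, let $g:\mathbb{R}^n\to\mathbb{R}\cup\{+\infty\}$ be proper, closed and $M$-weakly convex, $\varphi=f+g$, and consider the MINFBE algorithm with parameters $\gamma_0>0$, $\xi\in(0,1)$, $\beta\in[0,1)$. If $0<\gamma<\min\{(1-\beta)/L_f,1/M\}$, then for every $w\in\mathbb{R}^n$ the backtracking condition $$f(T_\gamma(w))>f(w)-\gamma\langle\nabla f(w),R_\gamma(w)\rangle+\tfrac{(1-\beta)\gamma}{2}\|R_\gamma(w)\|^2$$ does not hold. Moreover, the step sizes of MINFBE satisfy $\gamma_k\ge\gamma_\infty\ge\min\{\gamma_0,\xi(1-\beta)/L_f,1/M\}>0$ for all $k$, where $\gamma_\infty=\min_{i}\gamma_i$.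
   Context: $g$ is $M$-weakly convex if $g+\frac M2\|\cdot\|^2$ is convex. For $\gamma>0$: $T_\gamma(x)=\operatorname{prox}_{\gamma g}(x-\gamma\nabla f(x))$ with $\operatorname{prox}_{\gamma g}(x)=\arg\min_u\{g(u)+\frac1{2\gamma}\|u-x\|^2\}$, $R_\gamma(x)=\gamma^{-1}(x-T_\gamma(x))$, and $\varphi_\gamma(x)=\min_u\{f(x)+\langle\nabla f(x),u-x\rangle+g(u)+\frac1{2\gamma}\|u-x\|^2\}$. MINFBE: given $x^0$, $\gamma_0>0$, $\xi\in(0,1)$, $\beta\in[0,1)$, set $k=0$ and repeat: (1) if $R_{\gamma_k}(x^k)=0$ stop; (2) choose $d^k$ with $\langle d^k,\nabla\varphi_{\gamma_k}(x^k)\rangle\le0$; (3) choose $\tau_k\ge0$ and $w^k=x^k+\tau_kd^k$ with $\varphi_{\gamma_k}(w^k)\le\varphi_{\gamma_k}(x^k)$; (4) if $f(T_{\gamma_k}(w^k))>f(w^k)-\gamma_k\langle\nabla f(w^k),R_{\gamma_k}(w^k)\rangle+\frac{(1-\beta)\gamma_k}{2}\|R_{\gamma_k}(w^k)\|^2$, replace $\gamma_k$ by $\xi\gamma_k$ and go back to (1) with the same $k$; (5) otherwise set $x^{k+1}=T_{\gamma_k}(w^k)$, $\gamma_{k+1}=\gamma_k$, $k\leftarrow k+1$ and go to (1). *)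

From HB Require Import structures.
From mathcomp Require Import all_boot all_order all_algebra.
From mathcomp Require Import all_classical all_reals all_analysis.
Set Implicit Arguments. Unset Strict Implicit. Unset Printing Implicit Defensive.
Import Order.TTheory GRing.Theory Num.Theory.
Import numFieldNormedType.Exports.
Local Open Scope classical_set_scope.
Local Open Scope ring_scope.

Section Defs.
Variables (R : realType) (n : nat).
Notation V := 'rV[R]_n.

Definition dotp (u v : V) : R := \sum_(i < n) u ord0 i * v ord0 i.
Definition enorm (u : V) : R := Num.sqrt (dotp u u).

Definition C1_with_gradient (f : V -> R) (gradf : V -> V) : Prop :=
  (forall x, differentiable f x) /\
  (forall x v, 'D_v f x = dotp (gradf x) v) /\
  continuous gradf.

Definition lipschitz_grad (gradf : V -> V) (L : R) : Prop :=
  forall x y, enorm (gradf x - gradf y) <= L * enorm (x - y).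

Definition proper_fun (g : V -> \bar R) : Prop :=
  (forall x, g x != -oo%E) /\ exists x, g x \is a fin_num.

(* closed = lower semicontinuous = closed epigraph *)
Definition closed_fun (g : V -> \bar R) : Prop :=
  closed [set p : V * R | (g p.1 <= p.2%:E)%E].

Definition convex_efun (h : V -> \bar R) : Prop :=
  forall (x y : V) (t : R), 0 < t < 1 ->
    (h ((1 - t) *: x + t *: y)%R <= (1 - t)%:E * h x + t%:E * h y)%E.

Definition weakly_convex (g : V -> \bar R) (M : R) : Prop :=
  convex_efun (fun x => (g x + (M / 2 * enorm x ^+ 2)%:E)%E).

Definition is_prox (g : V -> \bar R) (gam : R) (x u : V) : Prop :=
  forall v, (g u + (1 / (2 * gam) * enorm (u - x) ^+ 2)%:E
             <= g v + (1 / (2 * gam) * enorm (v - x) ^+ 2)%:E)%E.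

Definition is_T (gradf : V -> V) (g : V -> \bar R) (gam : R) (x u : V) : Prop :=
  is_prox g gam (x - gam *: gradf x) u.

(* R_gam(x) = gam^-1 (x - T_gam(x)), given the value u of T_gam(x) *)
Definition resid (gam : R) (x u : V) : V := gam^-1 *: (x - u).

(* forward-backward envelope phi_gam(x) (the min, written as an inf) *)
Definition fbe (f : V -> R) (gradf : V -> V) (g : V -> \bar R) (gam : R)
  (x : V) : \bar R :=
  ereal_inf [set ((f x + dotp (gradf x) (u - x))%:E + g u
                  + (1 / (2 * gam) * enorm (u - x) ^+ 2)%:E)%E | u in setT].

Definition backtrack_cond (f : V -> R) (gradf : V -> V) (beta gam : R)
  (w u : V) : Prop :=
  f u > f w - gam * dotp (gradf w) (resid gam w u)
        + (1 - beta) * gam / 2 * enorm (resid gam w u) ^+ 2.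

(* A run of MINFBE, recorded event by event: at event t the algorithm is at
   iterate x t with current step size gam t; w t is the trial point chosen in
   steps (2)-(3) and u t = T_{gam t}(w t).  Event t is "stopped" if
   R_{gam t}(x t) = 0, i.e. T_{gam t}(x t) = x t. *)
Definition stopped (gradf : V -> V) (g : V -> \bar R) (x : nat -> V)
  (gam : nat -> R) (t : nat) : Prop :=
  is_T gradf g (gam t) (x t) (x t).

Definition reached (gradf : V -> V) (g : V -> \bar R) (x : nat -> V)
  (gam : nat -> R) (t : nat) : Prop :=
  forall s, (s < t)%N -> ~ stopped gradf g x gam s.

Definition minfbe_run (f : V -> R) (gradf : V -> V) (g : V -> \bar R)
  (gam0 xi beta : R) (x w u : nat -> V) (gam : nat -> R) : Prop :=
  gam 0%N = gam0 /\
  forall t, reached gradf g x gam t -> ~ stopped gradf g x gam t ->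
    [/\
        (fbe f gradf g (gam t) (w t) <= fbe f gradf g (gam t) (x t))%E,
        is_T gradf g (gam t) (w t) (u t),
        backtrack_cond f gradf beta (gam t) (w t) (u t) ->
          gam t.+1 = xi * gam t /\ x t.+1 = x t &
        ~ backtrack_cond f gradf beta (gam t) (w t) (u t) ->
          gam t.+1 = gam t /\ x t.+1 = u t].

End Defs.

From HB Require Import structures.
From mathcomp Require Import all_boot all_order all_algebra.
From mathcomp Require Import all_classical all_reals all_analysis.
From mathcomp Require Import ring lra.
Import Order.TTheory GRing.Theory Num.Theory.
Import numFieldNormedType.Exports.
Local Open Scope classical_set_scope.
Local Open Scope ring_scope.

(* Hence backtracking can only
   happen while gam_k >= (1 - beta)/L, and each backtrack multiplies gam_k by xi,
   so by induction every step size stays above min(gam0, xi (1 - beta)/L). *)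

Section Dotp.
Context {R : realType} {n : nat}.
Implicit Types (u v w : 'rV[R]_n) (a : R).

Lemma dotpC u v : dotp u v = dotp v u.
Proof. by apply: eq_bigr => i _; rewrite mulrC. Qed.

Lemma dotpDr u v w : dotp u (v + w) = dotp u v + dotp u w.
Proof. by rewrite /dotp -big_split; apply: eq_bigr => i _; rewrite !mxE mulrDr. Qed.

Lemma dotpZr u v a : dotp u (a *: v) = a * dotp u v.
Proof. by rewrite /dotp mulr_sumr; apply: eq_bigr => i _; rewrite !mxE mulrCA. Qed.

Lemma dotpNr u v : dotp u (- v) = - dotp u v.
Proof. by rewrite -scaleN1r dotpZr mulN1r. Qed.

Lemma dotpBr u v w : dotp u (v - w) = dotp u v - dotp u w.
Proof. by rewrite dotpDr dotpNr. Qed.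

Lemma dotpNl u v : dotp (- u) v = - dotp u v.
Proof. by rewrite dotpC dotpNr dotpC. Qed.

Lemma dotpZl u v a : dotp (a *: u) v = a * dotp u v.
Proof. by rewrite dotpC dotpZr dotpC. Qed.

Lemma dotpBl u v w : dotp (u - v) w = dotp u w - dotp v w.
Proof. by rewrite dotpC dotpBr !(dotpC w). Qed.

Lemma dotpp_ge0 u : 0 <= dotp u u.
Proof. by apply: sumr_ge0 => i _; rewrite -expr2 sqr_ge0. Qed.

Lemma enorm_ge0 u : 0 <= enorm u.
Proof. exact: sqrtr_ge0. Qed.

Lemma enorm_sqr u : enorm u ^+ 2 = dotp u u.
Proof. by rewrite sqr_sqrtr // dotpp_ge0. Qed.

(* Expand [0 <= <u - c v, u - c v>]. *)
Lemma dotp_le_mul u v (c : R) : 0 < c ->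
  dotp u u <= c ^+ 2 * dotp v v -> dotp u v <= c * dotp v v.
Proof.
move=> c_gt0 uu_le.
have := dotpp_ge0 (u - c *: v).
rewrite !(dotpBl, dotpBr, dotpZl, dotpZr) (dotpC v u) => sq_ge0.
have : 2 * c * dotp u v <= 2 * c * (c * dotp v v) by nra.
by rewrite ler_pM2l // mulr_gt0.
Qed.

End Dotp.

Lemma backtrack_condE (R : realType) (n : nat) (f : 'rV[R]_n -> R)
    (gradf : 'rV[R]_n -> 'rV[R]_n) (beta gam : R) (w u : 'rV[R]_n) :
  0 < gam ->
  backtrack_cond f gradf beta gam w u =
  (f w + dotp (gradf w) (u - w) + (1 - beta) / (2 * gam) * dotp (u - w) (u - w) < f u).
Proof.
move=> gam_gt0; rewrite /backtrack_cond /resid enorm_sqr !dotpZr dotpZl.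
rewrite -(opprB u w) dotpNl !dotpNr opprK.
by congr (_ + _ + _ < _); field; rewrite gt_eqF.
Qed.

Section Descent.
Variables (R : realType) (n : nat) (f : 'rV[R]_n -> R) (gradf : 'rV[R]_n -> 'rV[R]_n) (L : R).
Hypothesis L_gt0 : 0 < L.
Hypothesis f_C1 : C1_with_gradient f gradf.
Hypothesis gradf_lip : lipschitz_grad gradf L.

Lemma is_derive_line (w d : 'rV[R]_n) (t : R) :
  is_derive t 1 (fun s => f (s *: d + w)) (dotp (gradf (t *: d + w)) d).
Proof.
have [f_diff [Df _]] := f_C1.
set x := t *: d + w.
have quotE : (fun s : R => s^-1 *: (((fun s => f (s *: d + w)) \o shift t) (s *: 1)
                                    - f (t *: d + w))) =
             (fun s : R => s^-1 *: ((f \o shift x) (s *: d) - f x)).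
  apply/funext => s /=; congr (_ *: (f _ - _)).
  by rewrite /x scalerDl addrA [_%:A]mulr1.
apply: DeriveDef; first by rewrite /derivable quotE; exact: diff_derivable (f_diff x).
by rewrite -Df /derive quotE.
Qed.

Lemma gradf_increment_le (w d : 'rV[R]_n) (c : R) : 0 < c ->
  dotp (gradf (c *: d + w) - gradf w) d <= c * L * dotp d d.
Proof.
move=> c_gt0; apply: dotp_le_mul; first exact: mulr_gt0.
have := gradf_lip (c *: d + w) w; rewrite addrK => lip.
have : enorm (gradf (c *: d + w) - gradf w) ^+ 2 <= (L * enorm (c *: d)) ^+ 2.
  by rewrite lerXn2r // nnegrE ?enorm_ge0 // mulr_ge0 ?enorm_ge0 // ltW.
by rewrite exprMn !enorm_sqr dotpZl dotpZr; nra.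
Qed.

(* [k t = f (w + t (u - w)) - t <gradf w, u - w> - t^2 L/2 |u - w|^2] is
   nonincreasing on [0, 1]. *)
Lemma descent_lemma (w u : 'rV[R]_n) :
  f u <= f w + dotp (gradf w) (u - w) + L / 2 * dotp (u - w) (u - w).
Proof.
set d := u - w; set a := dotp (gradf w) d; set b := L / 2 * dotp d d.
pose h t := f (t *: d + w).
have h_deriv := is_derive_line w d.
pose k := h - ((fun t => t) * cst a + (fun t => t) ^+ 2 * cst b).
have k_deriv (t : R) : is_derive t (1 : R) k (dotp (gradf (t *: d + w)) d - (a + 2 * t * b)).
  apply: is_derive_eq.
  by rewrite /= !scaler0 !add0r ![_%:A]mulr1 expr1 [b *: _]mulrC.
have k_derivable (t : R) : derivable k t 1 by case: (k_deriv t).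
have k'_le0 (t : R) : t \in `]0, 1[ -> k^`()%classic t <= 0.
  rewrite in_itv /= => /andP[t_gt0 _].
  rewrite derive1E (@derive_val _ _ _ _ _ _ _ (k_deriv t)).
  have := gradf_increment_le w d t t_gt0.
  by rewrite dotpBl /a /b; lra.
have k_cont : {within `[0, 1], continuous k}.
  by apply: derivable_within_continuous => t _.
have k_nincr : k 1 <= k 0.
  by apply: (ler0_derive1_le_cc (fun t _ => k_derivable t) k'_le0 k_cont);
    rewrite ?in_itv /= ?lexx ?ler01.
have kE t : k t = f (t *: d + w) - (t * a + t ^+ 2 * b) by [].
move: k_nincr; rewrite !kE scale0r scale1r add0r /d subrK; lra.
Qed.

Lemma not_backtrack_cond_small_step (beta gam : R) :
  0 < gam -> gam < (1 - beta) / L ->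
  forall w u : 'rV[R]_n, ~ backtrack_cond f gradf beta gam w u.
Proof.
move=> gam_gt0 gam_lt w u; rewrite backtrack_condE //.
have L_le : L / 2 <= (1 - beta) / (2 * gam).
  have gamL_lt : gam * L < 1 - beta by rewrite -ltr_pdivlMr.
  rewrite -subr_ge0.
  have -> : (1 - beta) / (2 * gam) - L / 2 = (1 - beta - gam * L) / (2 * gam).
    by field; rewrite gt_eqF.
  by rewrite divr_ge0 ?subr_ge0 ?ltW // mulr_gt0.
have := ler_wpM2r (dotpp_ge0 (u - w)) L_le.
have := descent_lemma w u.
lra.
Qed.

End Descent.

Lemma minfbe_run_step_ge {R : realType} {n : nat} {f : 'rV[R]_n -> R}
    {gradf : 'rV[R]_n -> 'rV[R]_n} {g : 'rV[R]_n -> \bar R} {gam0 xi beta c : R}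
    {x w u : nat -> 'rV[R]_n} {gam : nat -> R} :
  0 < gam0 -> 0 < xi -> 0 < c ->
  (forall gam' : R, 0 < gam' -> gam' < c ->
     forall w' u' : 'rV[R]_n, ~ backtrack_cond f gradf beta gam' w' u') ->
  minfbe_run f gradf g gam0 xi beta x w u gam ->
  forall t, reached gradf g x gam t -> Num.min gam0 (xi * c) <= gam t.
Proof.
move=> gam0_gt0 xi_gt0 c_gt0 small_step_ok [gam_0 run].
have m_gt0 : 0 < Num.min gam0 (xi * c) by rewrite lt_min gam0_gt0 mulr_gt0.
elim=> [_ | t IH reached_t1]; first by rewrite gam_0 ge_min lexx.
have reached_t : reached gradf g x gam t.
  by move=> s s_lt; apply: reached_t1; rewrite ltnS ltnW.
have not_stopped_t : ~ stopped gradf g x gam t by apply: reached_t1.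
have m_le := IH reached_t.
have gam_t_gt0 := lt_le_trans m_gt0 m_le.
have [_ _ on_backtrack on_accept] := run t reached_t not_stopped_t.
have [bt | not_bt] := pselect (backtrack_cond f gradf beta (gam t) (w t) (u t)).
- have [-> _] := on_backtrack bt.
  have c_le : c <= gam t.
    by rewrite leNgt; apply/negP => gam_lt; exact: small_step_ok gam_t_gt0 gam_lt _ _ bt.
  by rewrite ge_min ler_pM2l // c_le orbT.
- by have [-> _] := on_accept not_bt.
Qed.

Theorem lemma2p8 (R : realType) (n : nat) (f : 'rV[R]_n -> R)
  (gradf : 'rV[R]_n -> 'rV[R]_n) (g : 'rV[R]_n -> \bar R) (L M : R)
  (gam0 xi beta : R) :
  0 < L -> 0 < M ->
  C1_with_gradient f gradf -> lipschitz_grad gradf L ->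
  proper_fun g -> closed_fun g -> weakly_convex g M ->
  0 < gam0 -> 0 < xi < 1 -> 0 <= beta < 1 ->
  (forall gam : R, 0 < gam -> gam < Num.min ((1 - beta) / L) (1 / M) ->
     forall w u : 'rV[R]_n, is_T gradf g gam w u ->
       ~ backtrack_cond f gradf beta gam w u)
  /\
  (forall (x w u : nat -> 'rV[R]_n) (gam : nat -> R),
     minfbe_run f gradf g gam0 xi beta x w u gam ->
     let gam_inf := inf [set gam t | t in reached gradf g x gam] in
     (forall k, reached gradf g x gam k -> gam_inf <= gam k) /\
     Num.min gam0 (Num.min (xi * (1 - beta) / L) (1 / M)) <= gam_inf /\
     0 < Num.min gam0 (Num.min (xi * (1 - beta) / L) (1 / M))).
Proof.
move=> L_gt0 M_gt0 f_C1 gradf_lip _ _ _ gam0_gt0 /andP[xi_gt0 _] /andP[_ beta_lt1].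
have small_step_ok := @not_backtrack_cond_small_step R n f gradf L L_gt0 f_C1 gradf_lip.
split=> [gam gam_gt0 | x w u gam run gam_inf].
  by rewrite lt_min => /andP[gam_lt _] w u _; exact: small_step_ok.
set m := Num.min gam0 _.
have c_gt0 : 0 < (1 - beta) / L by rewrite divr_gt0 // subr_gt0.
have m_gt0 : 0 < m by rewrite !lt_min gam0_gt0 -mulrA mulr_gt0 // divr_gt0.
have m_le : m <= Num.min gam0 (xi * ((1 - beta) / L)).
  by rewrite le_min ge_min lexx /= mulrA !ge_min lexx /= !orbT.
have m_lbound : lbound [set gam t | t in reached gradf g x gam] m.
  move=> _ [t reached_t <-]; apply: le_trans m_le _.
  exact: minfbe_run_step_ge gam0_gt0 xi_gt0 c_gt0 (small_step_ok beta) run t reached_t.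
split=> [k reached_k | ]; first by apply: (ge_inf (ex_intro _ m m_lbound)); exists k.
split=> //; apply: lb_le_inf => //.
by exists (gam 0%N), 0%N.
Qed.
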